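(* Let $B_3=\langle\sigma_1,\sigma_2\mid\sigma_1\sigma_2\sigma_1=\sigma_2\sigma_1\sigma_2\rangle$, $\Delta=\sigma_1\sigma_2\sigma_1$, and let $<_{DD}$ be the Dubrovina–Dubrovin ordering. Then for every braid $\beta\in B_3$ and every integer $k$, \[\Delta^{-2}<_{DD}\beta^{-1}\sigma_2^k\beta<_{DD}\Delta^2.\]
   Context: A word in $\sigma_1^{\pm1},\sigma_2^{\pm1}$ is 1-positive if $\sigma_1$ occurs in it and only with positive exponents. The Dubrovina–Dubrovin left-ordering $<_{DD}$ of $B_3$ has positive cone consisting of those $\beta\in B_3$ that admit a 1-positive representative word, together with the elements $\sigma_2^k$ for $k<0$. *)

(* The braid group B_3 is presented by words in the letters
   sigma_1^{+-1}, sigma_2^{+-1}, modulo the congruence generated by free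
   cancellation and the braid relation s1 s2 s1 = s2 s1 s2. *)
From Stdlib Require Import List ZArith.
Import ListNotations.

Inductive gen : Type := s1 | s2.

(* a letter: a generator together with its exponent sign (true = +1, false = -1) *)
Definition letter : Type := (gen * bool)%type.
Definition word : Type := list letter.

Definition inv_letter (x : letter) : letter := (fst x, negb (snd x)).
Definition inv_word (w : word) : word := rev (map inv_letter w).

Inductive braid_eq : word -> word -> Prop :=
| be_refl w : braid_eq w w
| be_sym u v : braid_eq u v -> braid_eq v u
| be_trans u v w : braid_eq u v -> braid_eq v w -> braid_eq u w
| be_cancel u v (x : letter) :
    braid_eq (u ++ x :: inv_letter x :: v) (u ++ v)
| be_braid u v :
    braid_eq (u ++ [(s1,true); (s2,true); (s1,true)] ++ v)
             (u ++ [(s2,true); (s1,true); (s2,true)] ++ v).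

Definition one_positive (w : word) : Prop :=
  In (s1, true) w /\ ~ In (s1, false) w.

Definition sigma2_pow (k : Z) : word :=
  if (0 <=? k)%Z then repeat (s2, true) (Z.to_nat k)
  else repeat (s2, false) (Z.to_nat (- k)).

Definition DD_pos (w : word) : Prop :=
  (exists w', braid_eq w w' /\ one_positive w') \/
  (exists k : Z, (k < 0)%Z /\ braid_eq w (sigma2_pow k)).

Definition DD_lt (a b : word) : Prop := DD_pos (inv_word a ++ b).

Definition Delta : word := [(s1,true); (s2,true); (s1,true)].
Definition Delta2 : word := Delta ++ Delta.
Definition Delta_m2 : word := inv_word Delta2.

(* Modulo its centre <Delta^2>, B_3 is the free product Z/2 * Z/3 of x = Delta and
   y = s1 s2 (x^2 = y^3 = Delta^2), so up to a central factor every braid is a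
   product w of n syllables x, y, y^2 alternating between x and the powers of y,
   and beta^-1 v beta = w^-1 v w.  Pairing the syllables of w as
   (y x) = Delta^2 s2^-1 and (y^2 x) = Delta^2 s1, and those of w^-1 as
   (x y)^-1 = Delta^-2 s1 and (x y^2)^-1 = Delta^-2 s2^-1, leaves positive unpaired
   syllables (using Delta^2 y^-1 = y^2 in w^-1).  So w = Delta^(2p) q and
   Delta^(2n) w^-1 = Delta^(2p') q' with q, q' free of s1^-1, and alternation forces
   p + p' = n - 1; hence Delta^2 w^-1 v w = q' v q, which is 1-positive when v is a
   power of s2 because q or q' contains s1.  Both inequalities are instances of
   this, Delta^2 being central. *)

From Stdlib Require Import List ZArith Setoid Morphisms Lia.
Import ListNotations.

Notation P1 := (s1, true).
Notation P2 := (s2, true).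
Notation N1 := (s1, false).
Notation N2 := (s2, false).

Infix "≡" := braid_eq (at level 70).

#[global] Instance braid_eq_Equivalence : Equivalence braid_eq.
Proof. constructor; red; eauto using be_refl, be_sym, be_trans. Qed.

Lemma braid_eq_app_l a u v : u ≡ v -> a ++ u ≡ a ++ v.
Proof.
  induction 1 as [| | u v w _ IHuv _ IHvw | u v x | u v].
  - reflexivity.
  - now symmetry.
  - now rewrite IHuv.
  - rewrite !(app_assoc a u). apply be_cancel.
  - rewrite !(app_assoc a u). apply be_braid.
Qed.

Lemma braid_eq_app_r b u v : u ≡ v -> u ++ b ≡ v ++ b.
Proof.
  induction 1 as [| | u v w _ IHuv _ IHvw | u v x | u v].
  - reflexivity.
  - now symmetry.
  - now rewrite IHuv.
  - rewrite <- !app_assoc. apply be_cancel.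
  - rewrite <- !app_assoc. apply be_braid.
Qed.

#[global] Instance app_Proper : Proper (braid_eq ==> braid_eq ==> braid_eq) (@app letter).
Proof.
  intros u u' Hu v v' Hv.
  transitivity (u' ++ v); [apply braid_eq_app_r | apply braid_eq_app_l]; assumption.
Qed.

#[global] Instance cons_Proper : Proper (eq ==> braid_eq ==> braid_eq) (@cons letter).
Proof. intros x y -> v v' H. exact (braid_eq_app_l [y] _ _ H). Qed.

Lemma braid_rel t : P1 :: P2 :: P1 :: t ≡ P2 :: P1 :: P2 :: t.
Proof. exact (be_braid [] t). Qed.

Lemma cancel_letter x t : x :: inv_letter x :: t ≡ t.
Proof. exact (be_cancel [] t x). Qed.

Lemma inv_word_app u v : inv_word (u ++ v) = inv_word v ++ inv_word u.
Proof. unfold inv_word. now rewrite map_app, rev_app_distr. Qed.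

Lemma inv_word_involutive w : inv_word (inv_word w) = w.
Proof.
  unfold inv_word. rewrite map_rev, rev_involutive, map_map.
  rewrite <- map_id. apply map_ext. intros [g b]. unfold inv_letter.
  simpl. now rewrite Bool.negb_involutive.
Qed.

Lemma app_inv_word_r w : w ++ inv_word w ≡ [].
Proof.
  induction w as [|x w IH]; [reflexivity|].
  change (inv_word (x :: w)) with (inv_word w ++ [inv_letter x]).
  cbn [app]. rewrite app_assoc, IH. exact (cancel_letter x []).
Qed.

Lemma app_inv_word_l w : inv_word w ++ w ≡ [].
Proof. rewrite <- (inv_word_involutive w) at 2. apply app_inv_word_r. Qed.

#[global] Instance inv_word_Proper : Proper (braid_eq ==> braid_eq) inv_word.
Proof.
  intros u v H.
  transitivity (inv_word u ++ u ++ inv_word v).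
  - rewrite <- (app_nil_r (inv_word u)) at 1. apply braid_eq_app_l.
    rewrite H, app_inv_word_r. reflexivity.
  - rewrite app_assoc, app_inv_word_l. reflexivity.
Qed.

Lemma app_cancel_l u a b : u ++ a ≡ u ++ b -> a ≡ b.
Proof.
  intro H.
  transitivity (inv_word u ++ u ++ a).
  - rewrite app_assoc, app_inv_word_l. reflexivity.
  - rewrite H, app_assoc, app_inv_word_l. reflexivity.
Qed.

Definition swap_letter (x : letter) : letter :=
  (match fst x with s1 => s2 | s2 => s1 end, snd x).

Lemma conj_inv_letter a x y :
  a ++ [x] ≡ [y] ++ a -> a ++ [inv_letter x] ≡ [inv_letter y] ++ a.
Proof.
  intro H.
  transitivity ([inv_letter y] ++ [y] ++ a ++ [inv_letter x]).
  - rewrite app_assoc. change ([inv_letter y] ++ [y]) with (inv_word [y] ++ [y]).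
    rewrite app_inv_word_l. reflexivity.
  - rewrite (app_assoc [y]), <- H, <- app_assoc.
    change ([x] ++ [inv_letter x]) with ([x] ++ inv_word [x]).
    rewrite app_inv_word_r, app_nil_r. reflexivity.
Qed.

Lemma Delta_letter x : Delta ++ [x] ≡ [swap_letter x] ++ Delta.
Proof.
  assert (H1 : Delta ++ [P1] ≡ [P2] ++ Delta) by (cbn; now rewrite (braid_rel [P1])).
  assert (H2 : Delta ++ [P2] ≡ [P1] ++ Delta) by (cbn; now rewrite <- (braid_rel [])).
  destruct x as [[|] [|]]; auto.
  - exact (conj_inv_letter _ _ _ H1).
  - exact (conj_inv_letter _ _ _ H2).
Qed.

Lemma Delta_word w : Delta ++ w ≡ map swap_letter w ++ Delta.
Proof.
  induction w as [|x w IH]; cbn [map app]; [now rewrite app_nil_r|].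
  change (x :: w) with ([x] ++ w).
  now rewrite app_assoc, Delta_letter, <- app_assoc, IH.
Qed.

Lemma Delta2_central w : Delta2 ++ w ≡ w ++ Delta2.
Proof.
  unfold Delta2.
  rewrite <- app_assoc, (Delta_word w), app_assoc, (Delta_word (map swap_letter w)),
    map_map, <- app_assoc.
  erewrite map_ext, map_id; [reflexivity|]. now intros [[|] b].
Qed.

Lemma Delta2_central_l w t : Delta2 ++ w ++ t ≡ w ++ Delta2 ++ t.
Proof. now rewrite app_assoc, Delta2_central, <- app_assoc. Qed.

Fixpoint Delta2_pow (n : nat) : word :=
  match n with 0 => [] | S n => Delta2 ++ Delta2_pow n end.

Lemma Delta2_pow_add m n : Delta2_pow (m + n) = Delta2_pow m ++ Delta2_pow n.
Proof.
  induction m as [|m IH]; cbn [Delta2_pow Nat.add]; [reflexivity|].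
  now rewrite IH, app_assoc.
Qed.

Lemma Delta2_pow_central n w : Delta2_pow n ++ w ≡ w ++ Delta2_pow n.
Proof.
  induction n as [|n IH]; cbn [Delta2_pow]; [now rewrite app_nil_r|].
  now rewrite <- app_assoc, IH, app_assoc, Delta2_central, <- app_assoc.
Qed.

Lemma Delta2_pow_central_l n w t : Delta2_pow n ++ w ++ t ≡ w ++ Delta2_pow n ++ t.
Proof. now rewrite app_assoc, Delta2_pow_central, app_assoc. Qed.

Lemma conj_Delta2_pow n u v :
  inv_word (Delta2_pow n ++ u) ++ v ++ Delta2_pow n ++ u ≡ inv_word u ++ v ++ u.
Proof.
  rewrite inv_word_app, <- !app_assoc, <- (Delta2_pow_central_l n v),
    (app_assoc (inv_word (Delta2_pow n))), app_inv_word_l.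
  reflexivity.
Qed.

Inductive syllable : Type := X | Y | YY.

Definition syllable_word (a : syllable) : word :=
  match a with X => Delta | Y => [P1; P2] | YY => [P1; P2; P1; P2] end.

Fixpoint syllables_word (c : list syllable) : word :=
  match c with [] => [] | a :: r => syllable_word a ++ syllables_word r end.

Definition is_X (a : syllable) : bool := match a with X => true | _ => false end.

Fixpoint alternating (c : list syllable) : Prop :=
  match c with
  | a :: (b :: _) as r => is_X a <> is_X b /\ alternating r
  | _ => True
  end.

Lemma Delta2_sigma1 : Delta2 ++ [P1] ≡ syllable_word YY ++ syllable_word X.
Proof. cbn. now rewrite (braid_rel [P1]). Qed.

Lemma Delta2_sigma2 : Delta2 ++ [P2] ≡ syllable_word X ++ syllable_word YY.
Proof. reflexivity. Qed.

Lemma Delta2_sigma1_inv : Delta2 ++ [N1] ≡ syllable_word X ++ syllable_word Y.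
Proof. cbn. now rewrite (cancel_letter P1 []). Qed.

Lemma Delta2_sigma2_inv : Delta2 ++ [N2] ≡ syllable_word Y ++ syllable_word X.
Proof. cbn. now rewrite (braid_rel [N2]), (cancel_letter P2 []). Qed.

Lemma Y_cube : syllable_word Y ++ syllable_word YY ≡ Delta2.
Proof. cbn. now rewrite <- (braid_rel []). Qed.

Lemma YY_square : syllable_word YY ++ syllable_word YY ≡ Delta2 ++ syllable_word Y.
Proof. cbn. now rewrite <- (braid_rel [P1; P2]). Qed.

Definition cons_syllable (a : syllable) (c : list syllable) : nat * list syllable :=
  match a, c with
  | X, X :: r => (1, r)
  | Y, Y :: r => (0, YY :: r)
  | Y, YY :: r => (1, r)
  | YY, Y :: r => (1, r)
  | YY, YY :: r => (1, Y :: r)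
  | _, _ => (0, a :: c)
  end.

Lemma cons_syllable_normal a c : alternating c ->
  exists n c', alternating c' /\
    syllable_word a ++ syllables_word c ≡ Delta2_pow n ++ syllables_word c'.
Proof.
  intro Hc. exists (fst (cons_syllable a c)), (snd (cons_syllable a c)). split.
  - destruct a, c as [|[] [|[] r]]; cbn in *; intuition congruence.
  - destruct a, c as [|[] r]; cbn [cons_syllable fst snd syllables_word];
      rewrite ?app_nil_r; try reflexivity; rewrite app_assoc.
    + now rewrite Y_cube.
    + now rewrite Y_cube.
    + now rewrite YY_square, app_assoc.
Qed.

Definition letter_syllables (x : letter) : syllable * syllable :=
  match x with
  | (s1, true) => (YY, X)
  | (s2, true) => (X, YY)
  | (s1, false) => (X, Y)
  | (s2, false) => (Y, X)
  end.

Lemma Delta2_letter x : Delta2 ++ [x] ≡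
  syllable_word (fst (letter_syllables x)) ++ syllable_word (snd (letter_syllables x)).
Proof.
  destruct x as [[] []]; cbn [letter_syllables fst snd].
  - exact Delta2_sigma1.
  - exact Delta2_sigma1_inv.
  - exact Delta2_sigma2.
  - exact Delta2_sigma2_inv.
Qed.

Lemma normal_form beta : exists a b c, alternating c /\
  Delta2_pow a ++ beta ≡ Delta2_pow b ++ syllables_word c.
Proof.
  induction beta as [|x beta (a & b & c & Hc & IH)].
  { now exists 0, 0, []. }
  destruct (letter_syllables x) as [p q] eqn:Ex.
  pose proof (Delta2_letter x) as Hx. rewrite Ex in Hx. cbn [fst snd] in Hx.
  destruct (cons_syllable_normal q c Hc) as (n & c' & Hc' & Hq).
  destruct (cons_syllable_normal p c' Hc') as (m & c'' & Hc'' & Hp).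
  exists (S a), (b + n + m), c''. split; [exact Hc''|].
  change (x :: beta) with ([x] ++ beta). cbn [Delta2_pow].
  rewrite <- app_assoc, Delta2_pow_central_l, (app_assoc Delta2), Hx, IH, !Delta2_pow_add.
  rewrite <- !app_assoc, <- !(Delta2_pow_central_l b), Hq, <- (Delta2_pow_central_l n), Hp.
  reflexivity.
Qed.

Lemma list_ind_tail {A : Type} (P : list A -> Prop) :
  P [] -> (forall a c, P c -> P (tl c) -> P (a :: c)) -> forall c, P c.
Proof.
  intros H0 HS c. enough (P c /\ P (tl c)) by tauto.
  induction c as [|a c [IH IHtl]]; cbn [tl]; auto.
Qed.

Lemma Delta2_pair_l u x k q :
  u ≡ Delta2 ++ [x] -> u ++ Delta2_pow k ++ q ≡ Delta2_pow (S k) ++ x :: q.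
Proof.
  intro H. rewrite H, <- app_assoc, <- (Delta2_pow_central_l k [x] q).
  cbn [Delta2_pow]. now rewrite <- app_assoc.
Qed.

Lemma Delta2_pair_inv u x : u ≡ Delta2 ++ [x] -> Delta2 ++ inv_word u ≡ [inv_letter x].
Proof.
  intro H. rewrite H, inv_word_app, app_assoc, Delta2_central, <- app_assoc,
    app_inv_word_r, app_nil_r.
  reflexivity.
Qed.

Fixpoint yx_pairs (c : list syllable) : nat :=
  match c with
  | Y :: X :: r | YY :: X :: r => S (yx_pairs r)
  | _ :: r => yx_pairs r
  | [] => 0
  end.

Fixpoint yx_reduce (c : list syllable) : word :=
  match c with
  | Y :: X :: r => N2 :: yx_reduce r
  | YY :: X :: r => P1 :: yx_reduce r
  | a :: r => syllable_word a ++ yx_reduce r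
  | [] => []
  end.

Lemma yx_reduce_spec c : syllables_word c ≡ Delta2_pow (yx_pairs c) ++ yx_reduce c.
Proof.
  induction c as [|a c IH IHtl] using list_ind_tail; [reflexivity|].
  assert (single : syllables_word (a :: c) ≡
                   Delta2_pow (yx_pairs c) ++ syllable_word a ++ yx_reduce c).
  { cbn [syllables_word]. now rewrite IH, Delta2_pow_central_l. }
  destruct a, c as [|[] r]; try exact single; cbn [syllables_word tl] in *;
    rewrite IHtl, app_assoc; apply Delta2_pair_l; symmetry.
  - exact Delta2_sigma2_inv.
  - exact Delta2_sigma1.
Qed.

Definition co_syllable (a : syllable) : syllable :=
  match a with X => X | Y => YY | YY => Y end.

Lemma Delta2_inv_syllable a :
  Delta2 ++ inv_word (syllable_word a) ≡ syllable_word (co_syllable a).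
Proof.
  assert (H : syllable_word (co_syllable a) ++ syllable_word a ≡ Delta2)
    by (destruct a; [reflexivity | exact Y_cube | exact Y_cube]).
  now rewrite <- H, <- app_assoc, app_inv_word_r, app_nil_r.
Qed.

Fixpoint xy_pairs (c : list syllable) : nat :=
  match c with
  | X :: Y :: r | X :: YY :: r => S (xy_pairs r)
  | _ :: r => xy_pairs r
  | [] => 0
  end.

Fixpoint xy_reduce (c : list syllable) : word :=
  match c with
  | X :: Y :: r => xy_reduce r ++ [P1]
  | X :: YY :: r => xy_reduce r ++ [N2]
  | a :: r => xy_reduce r ++ syllable_word (co_syllable a)
  | [] => []
  end.

Lemma xy_reduce_spec c :
  Delta2_pow (length c) ++ inv_word (syllables_word c) ≡
  Delta2_pow (xy_pairs c) ++ xy_reduce c.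
Proof.
  induction c as [|a c IH IHtl] using list_ind_tail; [reflexivity|].
  assert (single : Delta2_pow (length (a :: c)) ++ inv_word (syllables_word (a :: c)) ≡
                   Delta2_pow (xy_pairs c) ++ xy_reduce c ++ syllable_word (co_syllable a)).
  { cbn [length Delta2_pow syllables_word]. rewrite inv_word_app, !app_assoc.
    rewrite <- (app_assoc Delta2), Delta2_central, <- app_assoc, IH, Delta2_inv_syllable.
    now rewrite <- app_assoc. }
  destruct a, c as [|[] r]; try exact single;
    cbn [length Delta2_pow syllables_word tl xy_pairs xy_reduce] in *;
    rewrite (app_assoc (syllable_word X)), inv_word_app, <- !app_assoc,
      (app_assoc (Delta2_pow (length r))), IHtl, (Delta2_central_l (_ ++ _)).
  - rewrite (Delta2_pair_inv _ _ (symmetry Delta2_sigma1_inv)). now rewrite <- !app_assoc.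
  - rewrite (Delta2_pair_inv _ _ (symmetry Delta2_sigma2)). now rewrite <- !app_assoc.
Qed.

Lemma alternating_length c :
  alternating c -> c <> [] -> length c = S (xy_pairs c + yx_pairs c).
Proof.
  induction c as [|a [|b r] IH]; intros Hc Hne; [congruence | now destruct a |].
  destruct Hc as [Hab Hc]. specialize (IH Hc ltac:(discriminate)).
  destruct a, b; cbn [is_X] in Hab; try congruence;
    cbn [length yx_pairs xy_pairs] in *; lia.
Qed.

Lemma syllable_word_sigma1 a : In P1 (syllable_word a) /\ ~ In N1 (syllable_word a).
Proof. destruct a; cbn; intuition congruence. Qed.

(* yx_reduce c lacks s1 only if c starts with the pair y x, whose y is then
   unpaired in xy_reduce c. *)
Lemma reduce_In_sigma1 c : c <> [] -> In P1 (xy_reduce c ++ yx_reduce c).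
Proof.
  intro Hne. rewrite in_app_iff.
  destruct c as [|a [|b r]]; [congruence | right; destruct a; cbn; auto |].
  destruct a, b; try (right; cbn; now left).
  left. cbn [xy_reduce]. apply in_app_iff. right. cbn. auto.
Qed.

Lemma yx_reduce_no_sigma1_inv c : ~ In N1 (yx_reduce c).
Proof.
  induction c as [|a c IH IHtl] using list_ind_tail; [auto|].
  assert (single : ~ In N1 (syllable_word a ++ yx_reduce c)).
  { rewrite in_app_iff. pose proof (syllable_word_sigma1 a). tauto. }
  destruct a, c as [|[] r]; try exact single; cbn [yx_reduce tl] in *; cbn;
    intuition congruence.
Qed.

Lemma xy_reduce_no_sigma1_inv c : ~ In N1 (xy_reduce c).
Proof.
  induction c as [|a c IH IHtl] using list_ind_tail; [auto|].
  assert (single : ~ In N1 (xy_reduce c ++ syllable_word (co_syllable a))).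
  { rewrite in_app_iff. pose proof (syllable_word_sigma1 (co_syllable a)). tauto. }
  destruct a, c as [|[] r]; try exact single; cbn [xy_reduce tl] in *;
    rewrite in_app_iff; cbn; intuition congruence.
Qed.

Lemma alternating_conj c v : alternating c -> c <> [] ->
  Delta2 ++ inv_word (syllables_word c) ++ v ++ syllables_word c ≡
  xy_reduce c ++ v ++ yx_reduce c.
Proof.
  intros Hc Hne. apply (app_cancel_l (Delta2_pow (length c))).
  rewrite (Delta2_pow_central_l _ Delta2), (app_assoc (Delta2_pow _)), xy_reduce_spec,
    (yx_reduce_spec c), <- !app_assoc, <- (Delta2_pow_central_l (yx_pairs c) v),
    <- (Delta2_pow_central_l (yx_pairs c) (xy_reduce c)), (alternating_length c Hc Hne).
  cbn [Delta2_pow]. now rewrite Delta2_pow_add, <- !app_assoc.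
Qed.

Definition one_positive_braid (w : word) : Prop :=
  exists w', w ≡ w' /\ one_positive w'.

#[global] Instance one_positive_braid_Proper : Proper (braid_eq ==> iff) one_positive_braid.
Proof.
  intros u v H. unfold one_positive_braid.
  split; intros (w & Hw & Pw); exists w; split; auto; now rewrite <- Hw.
Qed.

Definition sigma2_word (v : word) : Prop := Forall (fun x => fst x = s2) v.

Lemma Delta2_conj_sigma2_word beta v :
  sigma2_word v -> one_positive_braid (Delta2 ++ inv_word beta ++ v ++ beta).
Proof.
  intro Hv.
  assert (HvN : ~ In N1 v) by (intro H; now apply (proj1 (Forall_forall _ _) Hv) in H).
  destruct (normal_form beta) as (a & b & c & Hc & Hbeta).
  rewrite <- (conj_Delta2_pow a beta v), Hbeta, conj_Delta2_pow.
  destruct c as [|a0 t].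
  - exists (Delta2 ++ v). split; [now rewrite app_nil_r|].
    split; rewrite in_app_iff; cbn; intuition congruence.
  - rewrite alternating_conj by (assumption || discriminate).
    exists (xy_reduce (a0 :: t) ++ v ++ yx_reduce (a0 :: t)). split; [reflexivity|].
    pose proof (reduce_In_sigma1 (a0 :: t) ltac:(discriminate)) as H1.
    pose proof (xy_reduce_no_sigma1_inv (a0 :: t)).
    pose proof (yx_reduce_no_sigma1_inv (a0 :: t)).
    split; rewrite !in_app_iff in *; tauto.
Qed.

Lemma sigma2_pow_sigma2_word k : sigma2_word (sigma2_pow k).
Proof.
  apply Forall_forall. unfold sigma2_pow.
  destruct (0 <=? k)%Z; intros x Hx; now apply repeat_spec in Hx as ->.
Qed.

Lemma sigma2_word_inv v : sigma2_word v -> sigma2_word (inv_word v).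
Proof. intro Hv. apply Forall_rev, Forall_map. exact Hv. Qed.

Theorem lemma28 : forall (beta : word) (k : Z),
  DD_lt Delta_m2 (inv_word beta ++ sigma2_pow k ++ beta) /\
  DD_lt (inv_word beta ++ sigma2_pow k ++ beta) Delta2.
Proof.
  intros beta k. split; left.
  - unfold Delta_m2. rewrite inv_word_involutive.
    exact (Delta2_conj_sigma2_word beta _ (sigma2_pow_sigma2_word k)).
  - change (one_positive_braid (inv_word (inv_word beta ++ sigma2_pow k ++ beta) ++ Delta2)).
    rewrite !inv_word_app, inv_word_involutive, <- Delta2_central, <- !app_assoc.
    apply Delta2_conj_sigma2_word, sigma2_word_inv, sigma2_pow_sigma2_word.
Qed.
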